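(* For every $n\ge2$ and every $A\subseteq[n]$, $f_n(A)\ge 2f_{n-1}(A)$ and $f_n(A)\ge 2^{n-1}$.
   Context: For $m\ge1$ and a set $B$ of positive integers, $f_m(B)$ denotes the number of linear orders $q$ on $[m]$ such that for every triple $i<j<k$ in $[m]$: if $j\in B$ then $i$ is not ranked last among $\{i,j,k\}$ in $q$, and if $j\notin B$ then $k$ is not ranked first among $\{i,j,k\}$ in $q$. *)

From mathcomp Require Import all_boot all_order all_fingroup.
Set Implicit Arguments. Unset Strict Implicit. Unset Printing Implicit Defensive.

(* Elements of [m] = {1,...,m} are represented by ordinals i : 'I_m, with
   i standing for the integer i+1.  A linear order q on [m] is represented
   by its rank bijection q : {perm 'I_m}: x is ranked before y iff q x < q y. *)

Definition good_triple (m : nat) (B : pred nat) (q : {perm 'I_m}) (i j k : 'I_m) : bool :=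
  if B j.+1 then ~~ ((q j < q i) && (q k < q i))   (* i not last *)
  else ~~ ((q k < q i) && (q k < q j)).            (* k not first *)

Definition good_order (m : nat) (B : pred nat) (q : {perm 'I_m}) : bool :=
  [forall i : 'I_m, forall j : 'I_m, forall k : 'I_m,
     ((i < j) && (j < k)) ==> good_triple B q i j k].

Definition f (m : nat) (B : pred nat) : nat :=
  #|[set q : {perm 'I_m} | good_order B q]|.

From mathcomp Require Import all_boot all_order all_fingroup.
From mathcomp Require Import zify.
Set Implicit Arguments. Unset Strict Implicit. Unset Printing Implicit Defensive.

(* Every good order q of [m+1] extends in two different ways to a good order
   of [m+2].  Either m+2 is ranked last; or, if m+1 is in B, m+2 takes over
   the rank of m+1, which moves to the end, and if m+1 is not in B, m+2 is
   ranked right next to m+1 (after it, unless m+1 is last).  In the second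
   extension m+2 is never last and sits where m+1 sat relative to every
   i, j < m+1, so the triples (i, j, m+2) inherit goodness from (i, j, m+1);
   the triples (i, m+1, m+2) are good precisely because of the choice made
   according to B.  Both extensions are injective, hence
   f_{m+2}(B) >= 2 f_{m+1}(B), and f_1(B) = 1 starts the induction. *)

Lemma good_orderP m B (q : {perm 'I_m}) :
  reflect (forall i j k : 'I_m, i < j -> j < k -> good_triple B q i j k)
          (good_order B q).
Proof.
apply: (iffP forallP) => [H i j k ij jk | H i].
  by move/forallP: (H i) => /(_ j) /forallP /(_ k) /implyP; apply; rewrite ij jk.
by apply/forallP => j; apply/forallP => k; apply/implyP => /andP[ij jk]; apply: H.
Qed.

Lemma ltn_ord_maxF n (x : 'I_n.+1) : (@ord_max n < x) = false.
Proof. by rewrite ltnNge leq_ord. Qed.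

Lemma good_triple_last m B (q : {perm 'I_m.+1}) i j k :
  q k = ord_max -> good_triple B q i j k.
Proof. by move=> qk; rewrite /good_triple qk !ltn_ord_maxF !andbF; case: ifP. Qed.

Lemma ltn_lift n (p : 'I_n.+1) (a b : 'I_n) : (lift p a < lift p b) = (a < b).
Proof. by rewrite /= /bump; case: (leqP p a); case: (leqP p b) => /= *; lia. Qed.

Lemma ltn_pivot_lift n (p : 'I_n.+1) (a : 'I_n) : (p < lift p a) = (p <= a).
Proof. by rewrite /= /bump; case: (leqP p a) => /= *; lia. Qed.

Lemma lift_max_of_ltn n (x k : 'I_n.+1) : x < k -> {y : 'I_n | x = lift ord_max y}.
Proof.
case: (unliftP ord_max x) => [y ->|-> /=]; first by exists y.
by rewrite ltnNge leq_ord.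
Qed.

Lemma leq_double_card (aT rT : finType) (S : {set aT}) (T : {set rT}) (F G : aT -> rT) :
  injective F -> injective G -> F @: S \subset T -> G @: S \subset T ->
  (forall x y, F x != G y) -> 2 * #|S| <= #|T|.
Proof.
move=> injF injG FST GST FG.
have disjFG : [disjoint F @: S & G @: S].
  apply/pred0P => z /=; apply/negP => /andP[/imsetP[x _ ->] /imsetP[y _ /eqP]].
  by rewrite (negbTE (FG x y)).
rewrite mul2n -addnn -{1}(card_imset S injF) -(card_imset S injG).
have /eqP <- : #|F @: S :|: G @: S| == #|F @: S| + #|G @: S|.
  by rewrite (leq_card_setU _ _).2.
by apply: subset_leq_card; rewrite subUset FST GST.
Qed.

Section ExtendPerm.

Variable m : nat.

Definition extend_fun (p : 'I_m.+1) (q : {perm 'I_m}) (x : 'I_m.+1) : 'I_m.+1 :=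
  if unlift ord_max x is Some y then lift p (q y) else p.

Lemma extend_fun_inj p q : injective (extend_fun p q).
Proof.
move=> x1 x2; rewrite /extend_fun.
case: (unliftP ord_max x1) => [y1 ->|->]; case: (unliftP ord_max x2) => [y2 ->|->] //.
- by move/lift_inj/perm_inj ->.
- by move=> E; have := neq_lift p (q y1); rewrite E eqxx.
- by move=> E; have := neq_lift p (q y2); rewrite -E eqxx.
Qed.

Definition extend_perm p q : {perm 'I_m.+1} := perm (@extend_fun_inj p q).

Lemma extend_perm_lift p q y : extend_perm p q (lift ord_max y) = lift p (q y).
Proof. by rewrite permE /extend_fun liftK. Qed.

Lemma extend_perm_max p q : extend_perm p q ord_max = p.
Proof. by rewrite permE /extend_fun unlift_none. Qed.

Lemma extend_perm_inj p1 p2 q1 q2 : extend_perm p1 q1 = extend_perm p2 q2 -> q1 = q2.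
Proof.
move=> E; have Ep : p1 = p2 by rewrite -(extend_perm_max p1 q1) E extend_perm_max.
apply/permP => y; apply: (@lift_inj _ p1).
by rewrite -!extend_perm_lift E Ep.
Qed.

Lemma good_triple_extend_lift B p q i j k :
  good_triple B (extend_perm p q) (lift ord_max i) (lift ord_max j) (lift ord_max k)
  = good_triple B q i j k.
Proof. by rewrite /good_triple !extend_perm_lift !ltn_lift !lift_max. Qed.

Lemma good_order_extend B p q :
  good_order B q ->
  (forall i j : 'I_m, i < j ->
     good_triple B (extend_perm p q) (lift ord_max i) (lift ord_max j) ord_max) ->
  good_order B (extend_perm p q).
Proof.
move=> /good_orderP good_q good_max; apply/good_orderP => i j k ij jk.
have [i' Ei] := lift_max_of_ltn (ltn_trans ij jk).
have [j' Ej] := lift_max_of_ltn jk.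
subst i j; rewrite !lift_max in ij jk.
case: (unliftP ord_max k) => [k' Ek|Ek]; subst k; last exact: good_max.
by rewrite good_triple_extend_lift good_q // -(lift_max k').
Qed.

End ExtendPerm.

Section TwoExtensions.

Variables (m : nat) (B : pred nat).
Implicit Types q : {perm 'I_m.+1}.

Definition append_last q : {perm 'I_m.+2} := extend_perm ord_max q.

Lemma append_last_max q : append_last q ord_max = ord_max.
Proof. exact: extend_perm_max. Qed.

Lemma good_append_last q : good_order B q -> good_order B (append_last q).
Proof.
move=> good_q; apply: good_order_extend => // i j _.
exact/good_triple_last/extend_perm_max.
Qed.

(* The element m+1, as an index of [m+2]. *)
Definition old_max : 'I_m.+2 := lift ord_max ord_max.

Lemma val_old_max : old_max = m :> nat.
Proof. exact: lift_max. Qed.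

(* m+1 and m+2 exchange their ranks in append_last q. *)
Definition swap_last q : {perm 'I_m.+2} := tperm old_max ord_max * append_last q.

Lemma good_swap_last q : B m.+1 -> good_order B q -> good_order B (swap_last q).
Proof.
move=> Bm /good_append_last /good_orderP good_q; apply/good_orderP => i j k ij jk.
have swap_low (x : 'I_m.+2) : x < m -> swap_last q x = append_last q x.
  move=> xm; rewrite permM tpermD //; apply: contraTneq xm => <-.
    by rewrite val_old_max ltnn.
  by rewrite /= ltnNge ltnW.
have swap_old : swap_last q old_max = ord_max.
  by rewrite permM tpermL append_last_max.
have swap_max : swap_last q ord_max = append_last q old_max.
  by rewrite permM tpermR.
case: (ltngtP k m) => [km | km | km].
- by rewrite /good_triple !swap_low; [apply: good_q | lia..].
- have -> : k = ord_max by apply/val_inj/anti_leq; rewrite km -ltnS ltn_ord.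
  have [jm | jm] : j < m \/ j = m :> nat by have := ltn_ord k; lia.
    rewrite /good_triple swap_max !swap_low //; last lia.
    by apply: good_q; rewrite // val_old_max.
  have -> : j = old_max by apply: ord_inj; rewrite val_old_max.
  by rewrite /good_triple val_old_max Bm swap_old ltn_ord_maxF.
- have -> : k = old_max by apply: ord_inj; rewrite val_old_max.
  exact: good_triple_last.
Qed.

Lemma append_last_inj : injective append_last.
Proof. by move=> q1 q2 /extend_perm_inj. Qed.

Lemma swap_last_inj : injective swap_last.
Proof. by move=> q1 q2 /mulgI /append_last_inj. Qed.

Lemma swap_last_max q : swap_last q ord_max != ord_max.
Proof. by rewrite permM tpermR extend_perm_lift lift_eqF. Qed.

(* Rank of m+2: right after m+1, or right before m+1 when m+1 is last. *)
Definition next_rank q : 'I_m.+2 := inord (minn (q ord_max).+1 m).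

Lemma val_next_rank q : next_rank q = minn (q ord_max).+1 m :> nat.
Proof. by rewrite inordK //; lia. Qed.

Lemma ltn_next_rank_lift q (v : 'I_m.+1) :
  v != q ord_max -> (next_rank q < lift (next_rank q) v) = (q ord_max < v).
Proof.
rewrite ltn_pivot_lift val_next_rank -val_eqE /=.
by have := ltn_ord v; have := ltn_ord (q ord_max); lia.
Qed.

Definition insert_next q : {perm 'I_m.+2} := extend_perm (next_rank q) q.

Lemma insert_next_inj : injective insert_next.
Proof. by move=> q1 q2 /extend_perm_inj. Qed.

Lemma insert_next_max q : insert_next q ord_max != ord_max.
Proof. by rewrite extend_perm_max -val_eqE /= val_next_rank; lia. Qed.

Lemma good_insert_next q : ~~ B m.+1 -> good_order B q -> good_order B (insert_next q).
Proof.
move=> nBm good_q; apply: good_order_extend => // i j ij.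
have qi : q i != q ord_max.
  by rewrite (inj_eq perm_inj) -val_eqE /=; have := ltn_ord j; lia.
rewrite /good_triple extend_perm_max !extend_perm_lift (ltn_next_rank_lift qi) lift_max.
case: (eqVneq j ord_max) => [-> | nj].
  rewrite (negbTE nBm) ltn_pivot_lift val_next_rank.
  by have := ltn_ord (q i); have := ltn_ord (q ord_max); move: qi; rewrite -val_eqE /=; lia.
have qj : q j != q ord_max by rewrite (inj_eq perm_inj).
rewrite (ltn_next_rank_lift qj) ltn_lift.
have jm : j < m by move: nj; rewrite -val_eqE /=; have := ltn_ord j; lia.
by have := (good_orderP _ _ good_q) i j ord_max ij jm.
Qed.

End TwoExtensions.

Lemma f_double m B : 2 * f m.+1 B <= f m.+2 B.
Proof.
have good_image (F : {perm 'I_m.+1} -> {perm 'I_m.+2}) :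
    (forall q, good_order B q -> good_order B (F q)) ->
    F @: [set q | good_order B q] \subset [set q | good_order B q].
  by move=> goodF; apply/subsetP => _ /imsetP[q + ->]; rewrite !inE => /goodF.
have last_neq (F : {perm 'I_m.+1} -> {perm 'I_m.+2}) :
    (forall q, F q ord_max != ord_max) -> forall q1 q2, append_last q1 != F q2.
  by move=> FN q1 q2; apply: contraNneq (FN q2) => <-; rewrite append_last_max.
rewrite /f; case: (boolP (B m.+1)) => Bm.
  apply: leq_double_card (@append_last_inj m) (@swap_last_inj m) _ _ _.
  - exact/good_image/good_append_last.
  - by apply/good_image => q; apply: good_swap_last.
  - exact/last_neq/swap_last_max.
apply: leq_double_card (@append_last_inj m) (@insert_next_inj m) _ _ _.
- exact/good_image/good_append_last.
- by apply/good_image => q; apply: good_insert_next.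
- exact/last_neq/insert_next_max.
Qed.

Lemma f1_gt0 B : 0 < f 1 B.
Proof.
rewrite /f card_gt0; apply/set0Pn; exists 1%g; rewrite inE.
by apply/good_orderP => -[[|//] ?] -[[|//] ?].
Qed.

Lemma f_ge_pow2 m B : 2 ^ m <= f m.+1 B.
Proof.
elim: m => [|m IHm]; first exact: f1_gt0.
by rewrite expnS (leq_trans _ (f_double m B)) // leq_mul2l.
Qed.

Theorem corollary1 (n : nat) (A : pred nat) :
  2 <= n ->
  (forall x, A x -> 1 <= x <= n) ->
  2 * f (n - 1) A <= f n A /\ 2 ^ (n - 1) <= f n A.
Proof.
case: n => [|[|m]] // _ _; rewrite !subSS subn0.
by split; [apply: f_double | apply: f_ge_pow2].
Qed.
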